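(* Let \(X\) be a nonempty set and let \(\Phi\) be a mapping with domain \(X^{2}\). Then the following conditions are equivalent. (i) There is a totally ordered set \(Q\) such that \(\Phi\) is combinatorially similar to a \(Q\)-pseudoultrametric. (ii) There is a poset \(Q\) such that \(\Phi\) is combinatorially similar to a \(Q\)-pseudoultrametric. (iii) \(\Phi\) is symmetric, the transitive closure \(u_{\Phi}^{t}\) of \(u_{\Phi}\) is antisymmetric, there is \(a_0 \in \Phi(X^{2})\) for which \(\Phi\) is \(a_0\)-coherent, and for every triple \(\langle x_1, x_2, x_3\rangle\) of points of \(X\) there is a permutation \((i_1,i_2,i_3)\) of \((1,2,3)\) such that \(\Phi(x_{i_1}, x_{i_2}) = \Phi(x_{i_2}, x_{i_3})\). (iv) There is \(b_0 \in \Phi(X^{2})\) such that \(\Phi(x,x) = b_0\) for every \(x \in X\), the binary relation \(\preccurlyeq_{\Phi} := u_{\Phi}^{t} \cup \Delta_{\Phi(X^{2})}\) (where \(\Delta_{\Phi(X^2)}=\{\langle b,b\rangle: b\in\Phi(X^2)\}\)) is a partial order on \(\Phi(X^{2})\), \(b_0\) is the smallest element of \((\Phi(X^{2}), \preccurlyeq_{\Phi})\), and \(\Phi\) is a \(\preccurlyeq_{\Phi}\)-pseudoultrametric on \(X\).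
   Context: For a mapping \(F\) with domain \(A\), \(F(A)\) denotes its range. Let \((Q,\preccurlyeq_Q)\) be a poset with a smallest element \(q_0\) and \(Z\) a nonempty set. A mapping \(d\colon Z^2\to Q\) is a \(Q\)-pseudoultrametric (= \(\preccurlyeq_Q\)-pseudoultrametric) if \(d\) is symmetric, \(d(z,z)=q_0\) for all \(z\in Z\), and for every triple \(\langle z_1,z_2,z_3\rangle\) of points of \(Z\) there is a permutation \((i_1,i_2,i_3)\) of \((1,2,3)\) with \(d(z_{i_1},z_{i_3})\preccurlyeq_Q d(z_{i_1},z_{i_2})\) and \(d(z_{i_1},z_{i_2})=d(z_{i_2},z_{i_3})\). For nonempty sets \(X,Y\) and mappings \(\Phi\) with domain \(X^2\), \(\Psi\) with domain \(Y^2\), \(\Phi\) is combinatorially similar to \(\Psi\) if there are bijections \(f\colon \Phi(X^2)\to\Psi(Y^2)\) and \(g\colon Y\to X\) with \(\Psi(x,y)=f(\Phi(g(x),g(y)))\) for all \(x,y\in Y\). \(\Phi\) with domain \(X^2\) is strongly consistent with an equivalence relation \(R\) on \(X\) if \(\langle x_1,x_2\rangle\in R\), \(\langle x_3,x_4\rangle\in R\) imply \(\Phi(x_1,x_3)=\Phi(x_2,x_4)\); for \(a_0\in\Phi(X^2)\), \(\Phi\) is \(a_0\)-coherent if \(\Phi^{-1}(a_0)\) is an equivalence relation on \(X\) and \(\Phi\) is strongly consistent with it. For \(\Phi\) with domain \(X^2\) and \(Y=\Phi(X^2)\), \(\langle y_1,y_2\rangle\in u_\Phi\) iff \(y_1,y_2\in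 Y\) and there are \(x_1,x_2,x_3\in X\) with \(y_1=\Phi(x_1,x_3)\) and \(y_2=\Phi(x_1,x_2)=\Phi(x_2,x_3)\). The transitive closure is \(\gamma^t=\bigcup_{n\ge1}\gamma^n\) with \(\gamma^{n+1}=\gamma^n\circ\gamma\), where \(\langle x,y\rangle\in\alpha\circ\beta\) iff there is \(z\) with \(\langle x,z\rangle\in\alpha\), \(\langle z,y\rangle\in\beta\). *)

Definition in_range {X A : Type} (Phi : X -> X -> A) (a : A) : Prop :=
  exists x y, Phi x y = a.

Definition some_perm {Z : Type} (P : Z -> Z -> Z -> Prop) (z1 z2 z3 : Z) : Prop :=
  P z1 z2 z3 \/ P z1 z3 z2 \/ P z2 z1 z3 \/ P z2 z3 z1 \/ P z3 z1 z2 \/ P z3 z2 z1.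

Definition poset {Q : Type} (le : Q -> Q -> Prop) : Prop :=
  (forall q, le q q) /\
  (forall p q, le p q -> le q p -> p = q) /\
  (forall p q r, le p q -> le q r -> le p r).

Definition total_order {Q : Type} (le : Q -> Q -> Prop) : Prop :=
  poset le /\ (forall p q, le p q \/ le q p).

Definition smallest {Q : Type} (le : Q -> Q -> Prop) (q0 : Q) : Prop :=
  forall q, le q0 q.

(* d is a (le)-pseudoultrametric with value q0 on the diagonal
   (the requirement that q0 is the smallest element of the poset is stated
   separately where needed) *)
Definition pseudoultrametric {Z Q : Type} (le : Q -> Q -> Prop) (q0 : Q)
  (d : Z -> Z -> Q) : Prop :=
  (forall x y, d x y = d y x) /\
  (forall z, d z z = q0) /\
  (forall z1 z2 z3,
     some_perm (fun a b c => le (d a c) (d a b) /\ d a b = d b c) z1 z2 z3).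

Definition comb_similar {X A Y B : Type} (Phi : X -> X -> A) (Psi : Y -> Y -> B)
  : Prop :=
  exists (f : A -> B) (g : Y -> X),
    (forall a, in_range Phi a -> in_range Psi (f a)) /\
    (forall a a', in_range Phi a -> in_range Phi a' -> f a = f a' -> a = a') /\
    (forall b, in_range Psi b -> exists a, in_range Phi a /\ f a = b) /\
    (forall y y', g y = g y' -> y = y') /\
    (forall x, exists y, g y = x) /\
    (forall x y, Psi x y = f (Phi (g x) (g y))).

Definition symmetric_map {X A : Type} (Phi : X -> X -> A) : Prop :=
  forall x y, Phi x y = Phi y x.

Definition u_rel {X A : Type} (Phi : X -> X -> A) (y1 y2 : A) : Prop :=
  in_range Phi y1 /\ in_range Phi y2 /\
  exists x1 x2 x3, y1 = Phi x1 x3 /\ y2 = Phi x1 x2 /\ Phi x1 x2 = Phi x2 x3.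

Definition rcomp {T : Type} (al be : T -> T -> Prop) (x y : T) : Prop :=
  exists z, al x z /\ be z y.

Fixpoint rpow {T : Type} (g : T -> T -> Prop) (n : nat) : T -> T -> Prop :=
  match n with
  | O => g            (* unused index: gamma^1 is rpow g 1 *)
  | S O => g
  | S m => rcomp (rpow g m) g
  end.

Definition tclos {T : Type} (g : T -> T -> Prop) (x y : T) : Prop :=
  exists n, 1 <= n /\ rpow g n x y.

Definition antisymmetric {T : Type} (R : T -> T -> Prop) : Prop :=
  forall x y, R x y -> R y x -> x = y.

Definition equivalence_rel {T : Type} (R : T -> T -> Prop) : Prop :=
  (forall x, R x x) /\ (forall x y, R x y -> R y x) /\
  (forall x y z, R x y -> R y z -> R x z).

Definition strongly_consistent {X A : Type} (Phi : X -> X -> A)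
  (R : X -> X -> Prop) : Prop :=
  forall x1 x2 x3 x4, R x1 x2 -> R x3 x4 -> Phi x1 x3 = Phi x2 x4.

Definition coherent {X A : Type} (Phi : X -> X -> A) (a0 : A) : Prop :=
  equivalence_rel (fun x y => Phi x y = a0) /\
  strongly_consistent Phi (fun x y => Phi x y = a0).

Definition le_Phi {X A : Type} (Phi : X -> X -> A) (a b : A) : Prop :=
  tclos (u_rel Phi) a b \/ (in_range Phi a /\ a = b).

Definition poset_on {A : Type} (S : A -> Prop) (le : A -> A -> Prop) : Prop :=
  (forall a b, le a b -> S a /\ S b) /\
  (forall a, S a -> le a a) /\
  (forall a b, S a -> S b -> le a b -> le b a -> a = b) /\
  (forall a b c, S a -> S b -> S c -> le a b -> le b c -> le a c).

(* (ii) => (iii): combinatorial similarity preserves every pattern of equalities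
   between values, and a pseudoultrametric d with values in a poset satisfies
   u_d <= the order of the poset, so the transitive closure of u_d is
   antisymmetric; the diagonal value is coherent because points at distance q0
   are interchangeable.
   (iii) => (iv): an isosceles triple Phi x1 x2 = Phi x2 x3 is exactly one
   u_Phi-step from Phi x1 x3 up to Phi x1 x2, so Phi is a pseudoultrametric for
   u_Phi^t united with the diagonal, and Phi x x is below Phi x y via (x, y, x).
   (iv) => (i): extend this partial order on Phi(X^2) to a linear order
   (Szpilrajn, by Zorn's lemma) and regard Phi as valued in its range. *)

From Stdlib Require Import Relations Lia.
From Stdlib Require Import Classical ClassicalEpsilon ProofIrrelevance.
From mathcomp Require classical_sets.

Lemma rpow_clos_trans {T : Type} (R : T -> T -> Prop) n a b :
  rpow R n a b -> clos_trans T R a b.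
Proof.
  revert b; induction n as [|[|n] IH]; intros b H.
  - now apply t_step.
  - now apply t_step.
  - destruct H as [c [Hac Hcb]].
    apply t_trans with c; [now apply IH | now apply t_step].
Qed.

Lemma tclos_iff_clos_trans {T : Type} (R : T -> T -> Prop) a b :
  tclos R a b <-> clos_trans T R a b.
Proof.
  split.
  - intros [n [_ H]]. exact (rpow_clos_trans R n a b H).
  - intros H. apply clos_trans_tn1 in H.
    induction H as [b Hab | b c Hbc _ [n [Hn IH]]].
    + exists 1. split; [lia | exact Hab].
    + exists (S n). split; [lia |].
      destruct n as [|n]; [lia |]. exists b. split; assumption.
Qed.

Lemma tclos_step {T : Type} (R : T -> T -> Prop) a b : R a b -> tclos R a b.
Proof. intros H. apply tclos_iff_clos_trans. now apply t_step. Qed.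

Lemma tclos_trans {T : Type} (R : T -> T -> Prop) a b c :
  tclos R a b -> tclos R b c -> tclos R a c.
Proof.
  rewrite !tclos_iff_clos_trans. intros Hab Hbc. now apply t_trans with b.
Qed.

Lemma tclos_least {T : Type} (R P : T -> T -> Prop) :
  (forall a b, R a b -> P a b) -> (forall a b c, P a b -> P b c -> P a c) ->
  forall a b, tclos R a b -> P a b.
Proof.
  intros HR HP a b H. apply tclos_iff_clos_trans in H.
  induction H; eauto.
Qed.

Lemma some_perm_map {Z W : Type} (P : Z -> Z -> Z -> Prop) (P' : W -> W -> W -> Prop)
  (h : Z -> W) :
  (forall a b c, P a b c -> P' (h a) (h b) (h c)) ->
  forall z1 z2 z3, some_perm P z1 z2 z3 -> some_perm P' (h z1) (h z2) (h z3).
Proof. intros H z1 z2 z3. unfold some_perm. intuition auto. Qed.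

Lemma in_range_app {X A : Type} (Phi : X -> X -> A) x y : in_range Phi (Phi x y).
Proof. now exists x, y. Qed.

Section Pseudoultrametric.
Context {Q Y : Type}.
Variables (le : Q -> Q -> Prop) (q0 : Q) (d : Y -> Y -> Q).
Hypothesis le_poset : poset le.
Hypothesis d_pu : pseudoultrametric le q0 d.

Lemma pseudoultrametric_cases a b c :
  (le (d a c) (d a b) /\ d a b = d b c) \/
  (le (d a b) (d a c) /\ d a c = d b c) \/
  (le (d b c) (d a b) /\ d a b = d a c).
Proof.
  destruct d_pu as [d_sym [_ d_tri]].
  (* Up to the symmetry of d, each of the six permutations is one of the three cases. *)
  destruct (d_tri a b c) as [H|[H|[H|[H|[H|H]]]]];
    rewrite ?(d_sym b a), ?(d_sym c a), ?(d_sym c b) in H; destruct H as [l e];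
    first [rewrite e in l | rewrite <- e in l | idtac]; intuition congruence.
Qed.

Lemma pseudoultrametric_isosceles_le a b c : d a b = d b c -> le (d a c) (d a b).
Proof.
  destruct le_poset as [le_refl _].
  intros E. destruct (pseudoultrametric_cases a b c) as [[H _]|[[_ H]|[_ H]]].
  - exact H.
  - replace (d a c) with (d a b) by congruence. apply le_refl.
  - rewrite <- H. apply le_refl.
Qed.

Lemma pseudoultrametric_some_perm_eq x1 x2 x3 :
  some_perm (fun a b c => d a b = d b c) x1 x2 x3.
Proof.
  destruct d_pu as [_ [_ d_tri]].
  apply (some_perm_map (fun a b c => le (d a c) (d a b) /\ d a b = d b c) _ (fun y => y));
    [| apply d_tri].
  now intros a b c [_ E].
Qed.

Lemma pseudoultrametric_antisymmetric : antisymmetric (tclos (u_rel d)).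
Proof.
  destruct le_poset as [_ [le_anti le_trans]].
  assert (u_le : forall a b, tclos (u_rel d) a b -> le a b).
  { apply tclos_least; [| exact le_trans].
    intros a b [_ [_ [y1 [y2 [y3 [-> [-> E]]]]]]].
    now apply pseudoultrametric_isosceles_le. }
  intros a b Hab Hba. apply le_anti; now apply u_le.
Qed.

Hypothesis q0_smallest : smallest le q0.

Lemma pseudoultrametric_eq_q0 a b c : d a b = q0 -> d a c = d b c.
Proof.
  destruct le_poset as [_ [le_anti _]].
  assert (below_q0 : forall q, le q q0 -> q = q0) by (intros q H; now apply le_anti).
  intros E. destruct (pseudoultrametric_cases a b c) as [[H E']|[[_ H]|[H E']]].
  - rewrite E in H. apply below_q0 in H. congruence.
  - exact H.
  - rewrite E in H. apply below_q0 in H. congruence.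
Qed.

Lemma pseudoultrametric_coherent : coherent d q0.
Proof.
  destruct d_pu as [d_sym [d_diag _]].
  split; [split; [| split] |].
  - exact d_diag.
  - intros x y E. now rewrite d_sym.
  - intros x y z Exy Eyz. now rewrite (pseudoultrametric_eq_q0 x y z Exy).
  - intros x1 x2 x3 x4 E12 E34.
    rewrite (pseudoultrametric_eq_q0 x1 x2 x3 E12), d_sym.
    now rewrite (pseudoultrametric_eq_q0 x3 x4 x2 E34), d_sym.
Qed.

End Pseudoultrametric.

Section CombSimilar.
Context {X A Y B : Type}.
Variables (Phi : X -> X -> A) (Psi : Y -> Y -> B).
Variables (f : A -> B) (g : Y -> X).
Hypothesis f_inj : forall a a', in_range Phi a -> in_range Phi a' -> f a = f a' -> a = a'.
Hypothesis g_surj : forall x, exists y, g y = x.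
Hypothesis Psi_def : forall y y', Psi y y' = f (Phi (g y) (g y')).

Lemma similar_eq_iff y1 y2 y3 y4 :
  Phi (g y1) (g y2) = Phi (g y3) (g y4) <-> Psi y1 y2 = Psi y3 y4.
Proof.
  rewrite !Psi_def. split; intros E.
  - now rewrite E.
  - apply f_inj; auto using in_range_app.
Qed.

Lemma similar_symmetric : symmetric_map Psi -> symmetric_map Phi.
Proof.
  intros Psi_sym x x'.
  destruct (g_surj x) as [y <-], (g_surj x') as [y' <-].
  apply similar_eq_iff, Psi_sym.
Qed.

Lemma similar_some_perm_eq :
  (forall y1 y2 y3, some_perm (fun a b c => Psi a b = Psi b c) y1 y2 y3) ->
  forall x1 x2 x3, some_perm (fun a b c => Phi a b = Phi b c) x1 x2 x3.
Proof.
  intros Psi_tri x1 x2 x3.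
  destruct (g_surj x1) as [y1 <-], (g_surj x2) as [y2 <-], (g_surj x3) as [y3 <-].
  apply (some_perm_map (fun a b c => Psi a b = Psi b c)); [| apply Psi_tri].
  intros a b c. apply similar_eq_iff.
Qed.

Lemma similar_coherent u v : coherent Psi (Psi u v) -> coherent Phi (Phi (g u) (g v)).
Proof.
  intros [[Psi_refl [Psi_sym Psi_trans]] Psi_cons].
  split; [split; [| split] |].
  - intros x. destruct (g_surj x) as [y <-]. apply similar_eq_iff, Psi_refl.
  - intros x x'. destruct (g_surj x) as [y <-], (g_surj x') as [y' <-].
    rewrite !similar_eq_iff. apply Psi_sym.
  - intros x x' x''.
    destruct (g_surj x) as [y <-], (g_surj x') as [y' <-], (g_surj x'') as [y'' <-].
    rewrite !similar_eq_iff. apply Psi_trans.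
  - intros x1 x2 x3 x4.
    destruct (g_surj x1) as [y1 <-], (g_surj x2) as [y2 <-],
      (g_surj x3) as [y3 <-], (g_surj x4) as [y4 <-].
    rewrite !similar_eq_iff. apply Psi_cons.
Qed.

Lemma similar_u_rel a b : u_rel Phi a b -> u_rel Psi (f a) (f b).
Proof.
  intros [_ [_ [x1 [x2 [x3 [-> [-> E]]]]]]].
  destruct (g_surj x1) as [y1 <-], (g_surj x2) as [y2 <-], (g_surj x3) as [y3 <-].
  rewrite <- !Psi_def.
  split; [apply in_range_app | split; [apply in_range_app |]].
  exists y1, y2, y3. split; [reflexivity | split; [reflexivity |]].
  now apply similar_eq_iff.
Qed.

Lemma similar_antisymmetric :
  antisymmetric (tclos (u_rel Psi)) -> antisymmetric (tclos (u_rel Phi)).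
Proof.
  intros Psi_anti a b Hab Hba.
  assert (u_range : forall p q, tclos (u_rel Phi) p q -> in_range Phi p /\ in_range Phi q).
  { apply tclos_least; [intros ? ? [? [? _]] | intros ? ? ? [? _] [_ ?]]; tauto. }
  assert (u_map : forall p q, tclos (u_rel Phi) p q -> tclos (u_rel Psi) (f p) (f q)).
  { apply tclos_least; [intros; now apply tclos_step, similar_u_rel |].
    intros a1 a2 a3. apply tclos_trans. }
  apply f_inj; try apply (u_range a b Hab).
  apply Psi_anti; now apply u_map.
Qed.

End CombSimilar.

Lemma similar_pseudoultrametric_coherent {X A Q Y : Type} (Phi : X -> X -> A)
  (le : Q -> Q -> Prop) (q0 : Q) (d : Y -> Y -> Q) :
  poset le -> smallest le q0 -> inhabited Y -> pseudoultrametric le q0 d ->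
  comb_similar Phi d ->
  symmetric_map Phi /\ antisymmetric (tclos (u_rel Phi)) /\
  (exists a0, in_range Phi a0 /\ coherent Phi a0) /\
  (forall x1 x2 x3, some_perm (fun a b c => Phi a b = Phi b c) x1 x2 x3).
Proof.
  intros le_poset q0_smallest [y0] d_pu [f [g [_ [f_inj [_ [_ [g_surj d_def]]]]]]].
  pose proof d_pu as [d_sym [d_diag _]].
  split; [| split; [| split]].
  - exact (similar_symmetric Phi d f g f_inj g_surj d_def d_sym).
  - apply (similar_antisymmetric Phi d f g f_inj g_surj d_def).
    now apply (pseudoultrametric_antisymmetric le q0).
  - exists (Phi (g y0) (g y0)). split; [apply in_range_app |].
    apply (similar_coherent Phi d f g f_inj g_surj d_def).
    rewrite d_diag. now apply (pseudoultrametric_coherent le).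
  - apply (similar_some_perm_eq Phi d f g f_inj g_surj d_def).
    now apply (pseudoultrametric_some_perm_eq le q0).
Qed.

Lemma poset_on_tclos_refl {T : Type} (S : T -> Prop) (R : T -> T -> Prop) :
  (forall a b, R a b -> S a /\ S b) -> antisymmetric (tclos R) ->
  poset_on S (fun a b => tclos R a b \/ (S a /\ a = b)).
Proof.
  intros R_field R_anti.
  assert (tclos_field : forall a b, tclos R a b -> S a /\ S b).
  { apply tclos_least; [exact R_field | intros ? ? ? [? _] [_ ?]; tauto]. }
  split; [| split; [| split]].
  - intros a b [H | [Sa <-]]; auto.
  - intros a Sa. now right.
  - intros a b _ _ [Hab | [_ E]] [Hba | [_ E']]; auto || congruence.
  - intros a b c Sa _ _ [Hab | [_ <-]] [Hbc | [_ <-]]; auto.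
    left. now apply tclos_trans with b.
Qed.

Lemma le_Phi_isosceles {X A : Type} (Phi : X -> X -> A) x1 x2 x3 :
  Phi x1 x2 = Phi x2 x3 -> le_Phi Phi (Phi x1 x3) (Phi x1 x2).
Proof.
  intros E. left. apply tclos_step.
  split; [apply in_range_app | split; [apply in_range_app |]].
  now exists x1, x2, x3.
Qed.

Lemma le_Phi_pseudoultrametric {X A : Type} (Phi : X -> X -> A) (a0 : A) :
  symmetric_map Phi -> antisymmetric (tclos (u_rel Phi)) -> (forall x, Phi x x = a0) ->
  (forall x1 x2 x3, some_perm (fun a b c => Phi a b = Phi b c) x1 x2 x3) ->
  poset_on (in_range Phi) (le_Phi Phi) /\
  (forall b, in_range Phi b -> le_Phi Phi a0 b) /\
  pseudoultrametric (le_Phi Phi) a0 Phi.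
Proof.
  intros Phi_sym Phi_anti Phi_diag Phi_tri.
  split; [| split].
  - apply poset_on_tclos_refl; [| exact Phi_anti].
    intros a b [Ha [Hb _]]. now split.
  - intros b [x [y <-]]. rewrite <- (Phi_diag x).
    apply le_Phi_isosceles, Phi_sym.
  - split; [exact Phi_sym | split; [exact Phi_diag |]].
    intros x1 x2 x3. apply (some_perm_map (fun a b c => Phi a b = Phi b c) _ (fun x => x));
      [| apply Phi_tri].
    intros a b c E. split; [now apply le_Phi_isosceles | exact E].
Qed.

Lemma poset_on_ext {A : Type} (S : A -> Prop) (R R' : A -> A -> Prop) :
  (forall a b, R a b <-> R' a b) -> poset_on S R -> poset_on S R'.
Proof.
  intros E [R_field [R_refl [R_anti R_trans]]].
  split; [| split; [| split]]; intros *; rewrite <- ?E.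
  - apply R_field.
  - apply R_refl.
  - apply R_anti.
  - apply R_trans.
Qed.

Lemma poset_on_directed {A : Type} (S : A -> Prop) (R : A -> A -> Prop) :
  (forall a, S a -> R a a) ->
  (forall a b c e, R a b -> R c e -> exists R', poset_on S R' /\
     (forall x y, R' x y -> R x y) /\ R' a b /\ R' c e) ->
  poset_on S R.
Proof.
  intros R_refl R_directed.
  split; [| split; [| split]].
  - intros a b Hab.
    destruct (R_directed a b a b Hab Hab) as [R' [[R'_field _] [_ [H _]]]].
    now apply R'_field.
  - exact R_refl.
  - intros a b Sa Sb Hab Hba.
    destruct (R_directed a b b a Hab Hba) as [R' [[_ [_ [R'_anti _]]] [_ [H H']]]].
    now apply R'_anti.
  - intros a b c Sa Sb Sc Hab Hbc.
    destruct (R_directed a b b c Hab Hbc) as [R' [[_ [_ [_ R'_trans]]] [R'_sub [H H']]]].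
    apply R'_sub. now apply R'_trans with b.
Qed.

Lemma poset_on_add_pair {A : Type} (S : A -> Prop) (M : A -> A -> Prop) a b :
  poset_on S M -> S a -> S b -> ~ M b a ->
  poset_on S (fun x y => M x y \/ (M x a /\ M b y)).
Proof.
  intros [M_field [M_refl [M_anti M_trans]]] Sa Sb Mba.
  assert (M_trans' : forall x y z, M x y -> M y z -> M x z).
  { intros x y z Hxy Hyz.
    destruct (M_field x y Hxy), (M_field y z Hyz). now apply M_trans with y. }
  split; [| split; [| split]].
  - intros x y [Hxy | [Hxa Hby]]; [now apply M_field |].
    split; [apply (M_field x a Hxa) | apply (M_field b y Hby)].
  - intros x Sx. left. now apply M_refl.
  - intros x y Sx Sy [Hxy | [Hxa Hby]] [Hyx | [Hya Hbx]]; [now apply M_anti | ..];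
      exfalso; apply Mba; eauto.
  - intros x y z Sx Sy Sz [Hxy | [Hxa Hby]] [Hyz | [Hya Hbz]].
    + left. eauto.
    + right. split; eauto.
    + right. split; eauto.
    + exfalso. apply Mba. eauto.
Qed.

Section LinearExtension.
Context {A : Type}.
Variables (S : A -> Prop) (le : A -> A -> Prop).
Hypothesis le_poset : poset_on S le.

(* Extensions of le are encoded as le plus a set of pairs, so that the union of
   the empty chain is an extension as well. *)
Let ext (G : A * A -> Prop) a b := le a b \/ G (a, b).

Let ext_chain_union (F : (A * A -> Prop) -> Prop) :
  (forall G, F G -> poset_on S (ext G)) ->
  (forall G G', F G -> F G' -> classical_sets.subset G G' \/ classical_sets.subset G' G) ->
  poset_on S (ext (classical_sets.bigcup F (fun G => G))).
Proof.
  intros F_poset F_chain.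
  assert (ext_sub : forall G, F G -> forall a b, ext G a b ->
            ext (classical_sets.bigcup F (fun G => G)) a b).
  { intros G FG a b [H | H]; [now left | right; now exists G]. }
  apply poset_on_directed.
  { intros a Sa. left. now apply le_poset. }
  intros a b c e [Hab | [G FG Hab]] [Hce | [G' FG' Hce]].
  - exists le. split; [exact le_poset |].
    split; [intros x y H; now left | now split].
  - exists (ext G'). split; [now apply F_poset | split; [now apply ext_sub |]].
    split; [now left | now right].
  - exists (ext G). split; [now apply F_poset | split; [now apply ext_sub |]].
    split; [now right | now left].
  - destruct (F_chain G G' FG FG') as [GG' | G'G].
    + exists (ext G'). split; [now apply F_poset | split; [now apply ext_sub |]].
      split; right; auto.
    + exists (ext G). split; [now apply F_poset | split; [now apply ext_sub |]].
      split; right; auto.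
Qed.

Theorem linear_extension : exists le', poset_on S le' /\
  (forall a b, le a b -> le' a b) /\ (forall a b, S a -> S b -> le' a b \/ le' b a).
Proof.
  destruct (classical_sets.Zorn_bigcup (P := fun G => poset_on S (ext G)))
    as [G [G_poset G_max]].
  { intros F F_poset F_chain. now apply ext_chain_union. }
  exists (ext G). split; [exact G_poset | split; [now left |]].
  intros a b Sa Sb.
  destruct (classic (ext G a b)) as [Hab | Hab]; [now left |].
  destruct (classic (ext G b a)) as [Hba | Hba]; [now right |].
  (* Otherwise adding the pair (a, b) gives a strictly larger extension. *)
  exfalso.
  pose proof G_poset as [_ [G_refl _]].
  apply (G_max (fun p => ext G (fst p) (snd p) \/ (ext G (fst p) a /\ ext G b (snd p)))).
  - split.
    + intros [x y] H. left. now right.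
    + intros Hsub. apply Hab. right. apply (Hsub (a, b)). right. auto.
  - apply poset_on_ext with (fun x y => ext G x y \/ (ext G x a /\ ext G b y)).
    + intros x y. unfold ext at 1. simpl. split; [now right |].
      intros [H | H]; [left; now left | exact H].
    + now apply poset_on_add_pair.
Qed.

End LinearExtension.

Lemma total_order_sig {A : Type} (S : A -> Prop) (le : A -> A -> Prop) :
  poset_on S le -> (forall a b, S a -> S b -> le a b \/ le b a) ->
  total_order (fun p q : {a | S a} => le (proj1_sig p) (proj1_sig q)).
Proof.
  intros [_ [le_refl [le_anti le_trans]]] le_total.
  split; [split; [| split] |].
  - intros [a Sa]. now apply le_refl.
  - intros [a Sa] [b Sb] Hab Hba. simpl in *.
    assert (a = b) as <- by now apply le_anti.
    f_equal. apply proof_irrelevance.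
  - intros [a Sa] [b Sb] [c Sc]. simpl. now apply le_trans.
  - intros [a Sa] [b Sb]. now apply le_total.
Qed.

Definition retract {A : Type} (S : A -> Prop) (a0 : A) (Sa0 : S a0) (a : A) : {a | S a} :=
  match excluded_middle_informative (S a) with
  | left Sa => exist S a Sa
  | right _ => exist S a0 Sa0
  end.

Lemma retract_val {A : Type} (S : A -> Prop) a0 (Sa0 : S a0) a :
  S a -> proj1_sig (retract S a0 Sa0 a) = a.
Proof.
  intros Sa. unfold retract.
  now destruct (excluded_middle_informative (S a)).
Qed.

Lemma comb_similar_postcomp {X A B : Type} (Phi : X -> X -> A) (h : A -> B) :
  (forall a a', in_range Phi a -> in_range Phi a' -> h a = h a' -> a = a') ->
  comb_similar Phi (fun x y => h (Phi x y)).
Proof.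
  intros h_inj. exists h, (fun x => x).
  split; [| split; [exact h_inj | split; [| split; [| split]]]].
  - intros a [x [y <-]]. now exists x, y.
  - intros b [x [y <-]]. exists (Phi x y). split; [apply in_range_app | reflexivity].
  - auto.
  - intros x. now exists x.
  - reflexivity.
Qed.

Lemma pseudoultrametric_postcomp {Z Q Q' : Type} (le : Q -> Q -> Prop)
  (le' : Q' -> Q' -> Prop) (q0 : Q) (d : Z -> Z -> Q) (h : Q -> Q') :
  (forall p q, in_range d p -> in_range d q -> le p q -> le' (h p) (h q)) ->
  pseudoultrametric le q0 d -> pseudoultrametric le' (h q0) (fun x y => h (d x y)).
Proof.
  intros h_mono [d_sym [d_diag d_tri]].
  split; [| split].
  - intros x y. now rewrite d_sym.
  - intros z. now rewrite d_diag.
  - intros z1 z2 z3.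
    apply (some_perm_map (fun a b c => le (d a c) (d a b) /\ d a b = d b c) _ (fun z => z));
      [| apply d_tri].
    intros a b c [H E]. split; [apply h_mono; auto using in_range_app | now rewrite E].
Qed.

Lemma pseudoultrametric_similar_total {X A : Type} (Phi : X -> X -> A)
  (le : A -> A -> Prop) (b0 : A) :
  in_range Phi b0 -> poset_on (in_range Phi) le ->
  (forall b, in_range Phi b -> le b0 b) -> pseudoultrametric le b0 Phi ->
  exists (le' : {a | in_range Phi a} -> {a | in_range Phi a} -> Prop) q0
    (d : X -> X -> {a | in_range Phi a}),
    total_order le' /\ smallest le' q0 /\
    pseudoultrametric le' q0 d /\ comb_similar Phi d.
Proof.
  intros Rb0 le_poset b0_least Phi_pu.
  destruct (linear_extension _ _ le_poset) as [le' [le'_poset [le_le' le'_total]]].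
  set (r := retract (in_range Phi) b0 Rb0).
  exists (fun p q => le' (proj1_sig p) (proj1_sig q)), (r b0), (fun x y => r (Phi x y)).
  split; [now apply total_order_sig | split; [| split]].
  - intros [b Rb]. unfold r. rewrite retract_val by exact Rb0. simpl.
    now apply le_le', b0_least.
  - apply (pseudoultrametric_postcomp le); [| exact Phi_pu].
    intros p q Rp Rq H. unfold r. rewrite !retract_val by assumption.
    now apply le_le'.
  - apply comb_similar_postcomp.
    intros a a' Ra Ra' E. unfold r in E.
    now rewrite <- (retract_val _ _ Rb0 a Ra), <- (retract_val _ _ Rb0 a' Ra'), E.
Qed.

Theorem theorem3p18 (X A : Type) (Phi : X -> X -> A) (hX : inhabited X) :
  let cond_i :=
    exists (Q : Type) (le : Q -> Q -> Prop) (q0 : Q) (Y : Type) (d : Y -> Y -> Q),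
      total_order le /\ smallest le q0 /\ inhabited Y /\
      pseudoultrametric le q0 d /\ comb_similar Phi d in
  let cond_ii :=
    exists (Q : Type) (le : Q -> Q -> Prop) (q0 : Q) (Y : Type) (d : Y -> Y -> Q),
      poset le /\ smallest le q0 /\ inhabited Y /\
      pseudoultrametric le q0 d /\ comb_similar Phi d in
  let cond_iii :=
    symmetric_map Phi /\
    antisymmetric (tclos (u_rel Phi)) /\
    (exists a0, in_range Phi a0 /\ coherent Phi a0) /\
    (forall x1 x2 x3,
       some_perm (fun a b c => Phi a b = Phi b c) x1 x2 x3) in
  let cond_iv :=
    exists b0, in_range Phi b0 /\
      (forall x, Phi x x = b0) /\
      poset_on (in_range Phi) (le_Phi Phi) /\
      (forall b, in_range Phi b -> le_Phi Phi b0 b) /\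
      pseudoultrametric (le_Phi Phi) b0 Phi in
  (cond_i <-> cond_ii) /\ (cond_ii <-> cond_iii) /\ (cond_iii <-> cond_iv).
Proof.
  intros ci cii ciii civ.
  assert (i_ii : ci -> cii).
  { intros (Q & le & q0 & Y & d & [le_poset _] & H). now exists Q, le, q0, Y, d. }
  assert (ii_iii : cii -> ciii).
  { intros (Q & le & q0 & Y & d & le_poset & q0_smallest & hY & d_pu & sim).
    now apply (similar_pseudoultrametric_coherent Phi le q0 d). }
  assert (iii_iv : ciii -> civ).
  { intros (Phi_sym & Phi_anti & (a0 & Ra0 & [[Phi_diag _] _]) & Phi_tri).
    exists a0. split; [exact Ra0 | split; [exact Phi_diag |]].
    now apply le_Phi_pseudoultrametric. }
  assert (iv_i : civ -> ci).
  { intros (b0 & Rb0 & _ & le_poset & b0_least & Phi_pu).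
    destruct (pseudoultrametric_similar_total Phi _ b0 Rb0 le_poset b0_least Phi_pu)
      as (le' & q0 & d & le'_total & q0_smallest & d_pu & sim).
    now exists _, le', q0, X, d. }
  tauto.
Qed.
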